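(* Let $N\ge1$, $h,\beta,\epsilon>0$, let $\boldsymbol{\varrho}_{k-1}\in\mathbb{R}^N_{\ge0}$ be a probability vector, $\boldsymbol{\psi}_{k-1}\in\mathbb{R}^N$, and $\boldsymbol{C}_k\in\mathbb{R}^{N\times N}$ with entries in $[0,\infty)$. Let $\boldsymbol{\Gamma}_k:=\exp(-\boldsymbol{C}_k/(2\epsilon))$ and $\boldsymbol{\xi}_{k-1}:=\exp(-\beta\boldsymbol{\psi}_{k-1}-\mathbf{1})$ (entrywise). Then the iteration, for $\ell=1,2,\dots$, $$\boldsymbol{z}_{\ell+1}=\Big(\boldsymbol{\xi}_{k-1}\oslash\big(\boldsymbol{\Gamma}_k^{\top}\big(\boldsymbol{\varrho}_{k-1}\oslash(\boldsymbol{\Gamma}_k\boldsymbol{z}_\ell)\big)\big)\Big)^{\frac{1}{1+\beta\epsilon/h}}$$ (equivalently $\boldsymbol{z}_{\ell+1}=(\boldsymbol{\xi}_{k-1}\oslash(\boldsymbol{\Gamma}_k^\top\boldsymbol{y}_\ell))^{1/(1+\beta\epsilon/h)}$ with $\boldsymbol{y}_\ell=\boldsymbol{\varrho}_{k-1}\oslash(\boldsymbol{\Gamma}_k\boldsymbol{z}_\ell)$) defines a map of $\mathbb{R}^N_{>0}$ into itself that is strictly contractive with respect to the Thompson metric on $\mathbb{R}^N_{>0}$, and it admits a unique fixed point $\boldsymbol{z}^{\rm opt}\in\mathbb{R}^N_{>0}$.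
   Context: Thompson metric on the positive orthant: for $\boldsymbol{z},\tilde{\boldsymbol{z}}\in\mathbb{R}^N_{>0}$, $d_T(\boldsymbol{z},\tilde{\boldsymbol{z}})=\log\max\{\max_i \boldsymbol{z}_i/\tilde{\boldsymbol{z}}_i,\ \max_i\tilde{\boldsymbol{z}}_i/\boldsymbol{z}_i\}$; $(\mathbb{R}^N_{>0},d_T)$ is a complete metric space. Strictly contractive means $d_T(\boldsymbol{\theta}(\boldsymbol{z}),\boldsymbol{\theta}(\tilde{\boldsymbol{z}}))\le c\,d_T(\boldsymbol{z},\tilde{\boldsymbol{z}})$ for some $c<1$. Notation: $\oslash$ is entrywise division; $\exp$ and powers are entrywise; $\mathbf{1}$ is the all-ones vector. (The iteration is the block-coordinate scheme used to solve $\boldsymbol{y}\odot(\boldsymbol{\Gamma}_k\boldsymbol{z})=\boldsymbol{\varrho}_{k-1}$, $\boldsymbol{z}\odot(\boldsymbol{\Gamma}_k^\top\boldsymbol{y})=\boldsymbol{\xi}_{k-1}\odot\boldsymbol{z}^{-\beta\epsilon/h}$ arising in an entropically regularized JKO proximal step.) *)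

From HB Require Import structures.
From mathcomp Require Import all_boot all_order all_algebra.
From mathcomp Require Import all_classical all_reals all_analysis.
Set Implicit Arguments. Unset Strict Implicit. Unset Printing Implicit Defensive.
Import Order.TTheory GRing.Theory Num.Theory.
Local Open Scope ring_scope.

Definition pos_vec (R : realType) (N : nat) (z : 'cV[R]_N) : Prop :=
  forall i, 0 < z i 0.

(* Thompson metric: log max { max_i z_i / w_i , max_i w_i / z_i }
   (the inner maxima are taken with seed 0, harmless since all ratios are > 0
   on the positive orthant and N >= 1). *)
Definition thompson (R : realType) (N : nat) (z w : 'cV[R]_N) : R :=
  ln (Num.max (\big[Num.max/0]_(i < N) (z i 0 / w i 0))
              (\big[Num.max/0]_(i < N) (w i 0 / z i 0))).

Definition Gammak (R : realType) (N : nat) (eps : R) (C : 'M[R]_N) : 'M[R]_N :=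
  \matrix_(i, j) expR (- C i j / (2 * eps)).

Definition xik (R : realType) (N : nat) (beta : R) (psi : 'cV[R]_N) : 'cV[R]_N :=
  \col_i expR (- beta * psi i 0 - 1).

Definition theta_map (R : realType) (N : nat) (h beta eps : R)
    (rho psi : 'cV[R]_N) (C : 'M[R]_N) (z : 'cV[R]_N) : 'cV[R]_N :=
  let G := Gammak eps C in
  let y := \col_i (rho i 0 / (G *m z) i 0) in
  let w := G^T *m y in
  \col_i ((xik beta psi i 0 / w i 0) `^ (1 / (1 + beta * eps / h))).

From HB Require Import structures.
From mathcomp Require Import all_boot all_order all_algebra.
From mathcomp Require Import all_classical all_reals all_analysis.
From mathcomp Require Import ring lra.
Set Implicit Arguments. Unset Strict Implicit. Unset Printing Implicit Defensive.
Import Order.TTheory GRing.Theory Num.Theory.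
Local Open Scope ring_scope.

(* Write [dominated K z w] for z <= K w entrywise; exp of the Thompson
   distance is the least K with z <= K w and w <= K z.  Every stage of theta
   transports this relation: multiplication by the positive matrices Gamma and
   Gamma^T preserves it, entrywise division of a fixed nonnegative vector
   reverses it, and the power a = 1/(1 + beta eps/h) turns K into K^a.  Hence
   theta contracts d_T by the factor a < 1.  In logarithmic coordinates the
   same estimate makes u |-> ln theta(exp u) an a-contraction for the sup norm,
   and Banach's theorem yields the unique positive fixed point. *)

(* Needed to see column vectors as a complete normed module in
   [banach_fixed_point]. *)
HB.instance Definition _ (R : realType) (m n : nat) := Complete.on 'M[R]_(m, n).

Section MatrixNorm.
Variables (R : realType) (m n : nat).
Implicit Types (x : 'M[R]_(m, n)) (c : R).

Lemma ler_norm_mx_entry x i j : `|x i j| <= `|x|.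
Proof.
rewrite [leRHS]/Num.Def.normr /= mx_normrE.
by apply/bigmax_geP; right; exists (i, j).
Qed.

Lemma ler_norm_mx x c : 0 <= c -> (forall i j, `|x i j| <= c) -> `|x| <= c.
Proof.
move=> hc hx; rewrite [leLHS]/Num.Def.normr /= mx_normrE.
by apply: bigmax_le => // -[i j] _; apply: hx.
Qed.

End MatrixNorm.

Section EntrywiseOperations.
Variables (R : realType) (n : nat).
Implicit Types (x y z w : 'cV[R]_n) (K a : R).

Definition dominated K x y := forall i, x i 0 <= K * y i 0.

Definition vdiv x y : 'cV[R]_n := \col_i (x i 0 / y i 0).
Definition vpowR x a : 'cV[R]_n := \col_i (x i 0 `^ a).
Definition vexpR x : 'cV[R]_n := \col_i expR (x i 0).
Definition vln x : 'cV[R]_n := \col_i ln (x i 0).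

Lemma pos_vec_ge0 x : pos_vec x -> forall i, 0 <= x i 0.
Proof. by move=> hx i; exact: ltW. Qed.

Lemma pos_vec_vdiv x y : pos_vec x -> pos_vec y -> pos_vec (vdiv x y).
Proof. by move=> hx hy i; rewrite mxE divr_gt0. Qed.

Lemma pos_vec_vpowR x a : pos_vec x -> pos_vec (vpowR x a).
Proof. by move=> hx i; rewrite mxE powR_gt0. Qed.

Lemma pos_vec_vexpR x : pos_vec (vexpR x).
Proof. by move=> i; rewrite mxE expR_gt0. Qed.

Lemma vexpRK : cancel vexpR vln.
Proof. by move=> x; apply/matrixP => i j; rewrite (ord1 j) !mxE expRK. Qed.

Lemma vlnK z : pos_vec z -> vexpR (vln z) = z.
Proof. by move=> hz; apply/matrixP => i j; rewrite (ord1 j) !mxE lnK ?posrE. Qed.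

Lemma dominated_vdiv (r : 'cV[R]_n) K x y : (forall i, 0 <= r i 0) ->
  pos_vec x -> pos_vec y -> dominated K x y -> dominated K (vdiv r y) (vdiv r x).
Proof.
move=> hr hx hy hxy i; rewrite !mxE.
have -> : r i 0 / y i 0 = x i 0 / y i 0 * (r i 0 / x i 0).
  by field; rewrite !gt_eqF.
apply: ler_wpM2r; first by rewrite divr_ge0 // ltW.
by rewrite ler_pdivrMr.
Qed.

Lemma dominated_vpowR K a x y : 0 <= a -> 0 < K ->
  (forall i, 0 <= x i 0) -> (forall i, 0 <= y i 0) ->
  dominated K x y -> dominated (K `^ a) (vpowR x a) (vpowR y a).
Proof.
move=> ha hK hx hy hxy i; rewrite !mxE -powRM ?(ltW hK) //.
by apply: ge0_ler_powR; rewrite ?nnegrE ?mulr_ge0 ?(ltW hK).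
Qed.

End EntrywiseOperations.

Lemma exists_gt0_of_sum1 (R : realType) (n : nat) (r : 'I_n -> R) :
  (forall i, 0 <= r i) -> \sum_i r i = 1 -> exists i, 0 < r i.
Proof.
move=> r_ge0 r_sum; have : \sum_i r i != 0 by rewrite r_sum oner_neq0.
by rewrite psumr_neq0 // => /hasP[i _ /andP[_ ri]]; exists i.
Qed.

Section MatrixAction.
Variables (R : realType) (m n : nat) (A : 'M[R]_(m, n)).
Implicit Types (x y : 'cV[R]_n) (K : R).

Lemma pos_vec_mulmx x : (forall i j, 0 < A i j) ->
  (forall j, 0 <= x j 0) -> (exists j, 0 < x j 0) -> pos_vec (A *m x).
Proof.
move=> hA hx [j hj] i; rewrite mxE (bigD1 j) //=.
rewrite ltr_wpDr ?mulr_gt0 ?sumr_ge0 // => k _.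
by rewrite mulr_ge0 // ltW.
Qed.

Lemma dominated_mulmx K x y : (forall i j, 0 <= A i j) ->
  dominated K x y -> dominated K (A *m x) (A *m y).
Proof.
move=> hA hxy i; rewrite !mxE mulr_sumr; apply: ler_sum => k _.
by rewrite mulrCA ler_wpM2l.
Qed.

End MatrixAction.

Section Thompson.
Variables (R : realType) (N : nat).
Hypothesis hN : (0 < N)%N.
Implicit Types (z w : 'cV[R]_N).

Lemma thompsonC z w : thompson z w = thompson w z.
Proof. by rewrite /thompson maxC. Qed.

Let ratio_max z w := Num.max (\big[Num.max/0]_(i < N) (z i 0 / w i 0))
                             (\big[Num.max/0]_(i < N) (w i 0 / z i 0)).

Lemma le_ratio_max z w i : z i 0 / w i 0 <= ratio_max z w.
Proof. by rewrite le_max le_bigmax. Qed.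

Lemma expR_thompson z w : pos_vec z -> pos_vec w ->
  expR (thompson z w) = ratio_max z w.
Proof.
move=> hz hw; rewrite lnK // posrE.
exact: lt_le_trans (divr_gt0 (hz (Ordinal hN)) (hw _)) (le_ratio_max _ _ _).
Qed.

Lemma dominated_thompson z w : pos_vec z -> pos_vec w ->
  dominated (expR (thompson z w)) z w.
Proof.
by move=> hz hw i; rewrite expR_thompson // -ler_pdivrMr // le_ratio_max.
Qed.

Lemma thompson_le_ln K z w : pos_vec z -> pos_vec w -> 0 < K ->
  dominated K z w -> dominated K w z -> thompson z w <= ln K.
Proof.
move=> hz hw hK hzw hwz.
rewrite -ler_expR expR_thompson // lnK ?posrE // ge_max.
by apply/andP; split; apply: bigmax_le => [|i _]; rewrite ?(ltW hK) // ler_pdivrMr.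
Qed.

End Thompson.

Section DominanceExponent.
Variables (R : realType) (n : nat) (a : R) (f : 'cV[R]_n -> 'cV[R]_n).
Hypotheses (a_ge0 : 0 <= a) (f_pos : forall z, pos_vec z -> pos_vec (f z)).
Hypothesis f_dominated : forall K z w, 0 < K -> pos_vec z -> pos_vec w ->
  dominated K z w -> dominated (K `^ a) (f z) (f w).

Lemma thompson_contraction z w : (0 < n)%N -> pos_vec z -> pos_vec w ->
  thompson (f z) (f w) <= a * thompson z w.
Proof.
move=> hn hz hw; set t := thompson z w.
have hK : 0 < expR t `^ a by rewrite powR_gt0 ?expR_gt0.
suff : thompson (f z) (f w) <= ln (expR t `^ a) by rewrite ln_powR expRK.
apply: (thompson_le_ln hn) => //.
- exact: f_pos.
- exact: f_pos.
- exact: f_dominated (expR_gt0 _) hz hw (dominated_thompson hn hz hw).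
- rewrite /t thompsonC.
  exact: f_dominated (expR_gt0 _) hw hz (dominated_thompson hn hw hz).
Qed.

Definition log_conj (u : 'cV[R]_n) := vln (f (vexpR u)).

Lemma log_conj_lipschitz u v : `|log_conj u - log_conj v| <= a * `|u - v|.
Proof.
have one_sided x y i : log_conj x i 0 - log_conj y i 0 <= a * `|x - y|.
  have hK : 0 < expR `|x - y| by rewrite expR_gt0.
  have dom : dominated (expR `|x - y|) (vexpR x) (vexpR y).
    move=> j; rewrite !mxE -expRD ler_expR -lerBlDr.
    have := ler_norm_mx_entry (x - y) j 0; rewrite !mxE ler_norml.
    by case/andP.
  have := f_dominated hK (pos_vec_vexpR x) (pos_vec_vexpR y) dom i.
  have hy := f_pos (pos_vec_vexpR y) i.
  have hx := f_pos (pos_vec_vexpR x) i.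
  rewrite -ler_ln ?posrE ?mulr_gt0 ?powR_gt0 // lnM ?posrE ?powR_gt0 //.
  by rewrite ln_powR expRK !mxE lerBlDr.
apply: ler_norm_mx => [|i j]; first by rewrite mulr_ge0.
have := one_sided u v i; have := one_sided v u i; rewrite (ord1 j) distrC !mxE ler_norml.
by move=> hvu huv; apply/andP; split; lra.
Qed.

Lemma log_conj_fixed z : pos_vec z -> log_conj (vln z) = vln z <-> f z = z.
Proof.
move=> hz; rewrite /log_conj vlnK //; split => [fz | -> //].
by rewrite -[f z]vlnK ?fz ?vlnK //; exact: f_pos.
Qed.

Lemma exists_unique_pos_fixed_point : a < 1 ->
  exists z, pos_vec z /\ f z = z /\ forall w, pos_vec w -> f w = w -> w = z.
Proof.
move=> a_lt1.
have contr : is_contraction (totalfun log_conj : {fun setT >-> setT}).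
  by exists (NngNum a_ge0); split => // -[u v] _; exact: log_conj_lipschitz.
have [p _ fix_p] := banach_fixed_point contr closedT (ex_intro _ 0 I).
exists (vexpR p); split; first exact: pos_vec_vexpR.
split; first by apply/(log_conj_fixed (pos_vec_vexpR p)); rewrite vexpRK.
move=> w hw /(log_conj_fixed hw) fix_w.
rewrite -(vlnK hw); congr vexpR.
exact: contraction_fixpoint_unique contr I I (esym fix_w) fix_p.
Qed.

End DominanceExponent.

Lemma Gammak_gt0 (R : realType) (N : nat) (eps : R) (C : 'M[R]_N) i j :
  0 < Gammak eps C i j.
Proof. by rewrite mxE expR_gt0. Qed.

Lemma pos_vec_xik (R : realType) (N : nat) (beta : R) (psi : 'cV[R]_N) :
  pos_vec (xik beta psi).
Proof. by move=> i; rewrite mxE expR_gt0. Qed.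

Lemma inv1D_gt0 (R : realType) (t : R) : 0 < t -> 0 < 1 / (1 + t).
Proof. by move=> t0; rewrite divr_gt0 // addr_gt0. Qed.

Lemma inv1D_lt1 (R : realType) (t : R) : 0 < t -> 1 / (1 + t) < 1.
Proof. by move=> t0; rewrite ltr_pdivrMr ?addr_gt0 // mul1r ltrDl. Qed.

Section ThetaMap.
Variables (R : realType) (N : nat) (h beta eps : R) (rho psi : 'cV[R]_N).
Variable (C : 'M[R]_N).
Hypotheses (hh : 0 < h) (hbeta : 0 < beta) (heps : 0 < eps).
Hypotheses (hN : (0 < N)%N) (hrho_nn : forall i, 0 <= rho i 0).
Hypothesis hrho_sum : \sum_(i < N) rho i 0 = 1.

Let G := Gammak eps C.
Let W z := G^T *m vdiv rho (G *m z).
Let a := 1 / (1 + beta * eps / h).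

Lemma theta_exponent_gt0 : 0 < a.
Proof. by rewrite inv1D_gt0 // divr_gt0 ?mulr_gt0. Qed.

Lemma theta_exponent_lt1 : a < 1.
Proof. by rewrite inv1D_lt1 // divr_gt0 ?mulr_gt0. Qed.

Lemma theta_mapE z : theta_map h beta eps rho psi C z =
  vpowR (vdiv (xik beta psi) (W z)) a.
Proof. by apply/matrixP => i j; rewrite (ord1 j) !mxE. Qed.

Lemma pos_vec_mulG z : pos_vec z -> pos_vec (G *m z).
Proof.
move=> hz; apply: pos_vec_mulmx; first exact: Gammak_gt0.
  exact: pos_vec_ge0.
by exists (Ordinal hN).
Qed.

Lemma pos_vec_W z : pos_vec z -> pos_vec (W z).
Proof.
move=> hz; have Gz := pos_vec_mulG hz.
apply: pos_vec_mulmx => [i j|j|]; first by rewrite mxE Gammak_gt0.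
  by rewrite mxE divr_ge0 // ltW.
have [j rho_j] := exists_gt0_of_sum1 hrho_nn hrho_sum.
by exists j; rewrite mxE divr_gt0.
Qed.

Lemma pos_vec_theta_map z : pos_vec z -> pos_vec (theta_map h beta eps rho psi C z).
Proof.
by move=> hz; rewrite theta_mapE; apply/pos_vec_vpowR/pos_vec_vdiv/pos_vec_W;
  [exact: pos_vec_xik|].
Qed.

Lemma dominated_W K z w : pos_vec z -> pos_vec w ->
  dominated K z w -> dominated K (W w) (W z).
Proof.
have G_ge0 i j : 0 <= G i j by exact: ltW (Gammak_gt0 _ _ _ _).
move=> hz hw hzw; apply: dominated_mulmx => [i j|]; first by rewrite mxE.
apply: (dominated_vdiv hrho_nn (pos_vec_mulG hz) (pos_vec_mulG hw)).
exact: dominated_mulmx.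
Qed.

Lemma dominated_theta_map K z w : 0 < K -> pos_vec z -> pos_vec w ->
  dominated K z w -> dominated (K `^ a)
    (theta_map h beta eps rho psi C z) (theta_map h beta eps rho psi C w).
Proof.
move=> hK hz hw hzw; rewrite !theta_mapE.
have [Wz Ww] := (pos_vec_W hz, pos_vec_W hw).
apply: (dominated_vpowR (ltW theta_exponent_gt0) hK).
- exact/pos_vec_ge0/pos_vec_vdiv/Wz/pos_vec_xik.
- exact/pos_vec_ge0/pos_vec_vdiv/Ww/pos_vec_xik.
apply: (dominated_vdiv (pos_vec_ge0 (pos_vec_xik _ _)) Ww Wz).
exact: dominated_W.
Qed.

End ThetaMap.

Theorem theorem2 (R : realType) (N : nat) (hN : (1 <= N)%N)
    (h beta eps : R) (hh : 0 < h) (hbeta : 0 < beta) (heps : 0 < eps)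
    (rho psi : 'cV[R]_N) (C : 'M[R]_N)
    (hrho_nn : forall i, 0 <= rho i 0)
    (hrho_sum : \sum_(i < N) rho i 0 = 1)
    (hC : forall i j, 0 <= C i j) :
  let theta := theta_map h beta eps rho psi C in
  (forall z, pos_vec z -> pos_vec (theta z)) /\
  (exists c : R, 0 <= c /\ c < 1 /\
     forall z w, pos_vec z -> pos_vec w ->
       thompson (theta z) (theta w) <= c * thompson z w) /\
  (exists zopt, pos_vec zopt /\ theta zopt = zopt /\
     forall z, pos_vec z -> theta z = z -> z = zopt).
Proof.
move=> theta; rewrite {}/theta.
have theta_pos := pos_vec_theta_map h beta eps psi C hN hrho_nn hrho_sum.
have theta_dom := dominated_theta_map psi C hh hbeta heps hN hrho_nn hrho_sum.
have a_ge0 := ltW (theta_exponent_gt0 hh hbeta heps).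
have a_lt1 := theta_exponent_lt1 hh hbeta heps.
split; first exact: theta_pos.
split; last exact: exists_unique_pos_fixed_point a_ge0 theta_pos theta_dom a_lt1.
exists (1 / (1 + beta * eps / h)); do 2!split => //.
move=> z w hz hw; exact: (thompson_contraction theta_pos theta_dom hN hz hw).
Qed.
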